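(* Let $(P,\mathcal{B})$ be a nontrivial pairwise balanced design with $n\ge 3$ points. Then \[\sum_{B\in\mathcal{B}}|B|\ \ge\ 3n-3,\] and equality holds if and only if $(P,\mathcal{B})$ is a near-pencil.
   Context: A pairwise balanced design (PBD) is a pair $(P,\mathcal{B})$ where $P$ is a finite set of points and $\mathcal{B}$ is a family of subsets of $P$ (blocks), each of size at least $2$, such that every two distinct points of $P$ lie in exactly one block. It is nontrivial if $P\notin\mathcal{B}$. A PBD on $n$ points is a near-pencil if it has one block of size $n-1$ and all other blocks have size $2$. *)

From mathcomp Require Import all_boot.
Set Implicit Arguments. Unset Strict Implicit. Unset Printing Implicit Defensive.

Definition is_PBD (T : finType) (B : {set {set T}}) : Prop :=
  (forall b, b \in B -> 2 <= #|b|) /\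
  (forall x y : T, x != y -> exists! b, b \in B /\ x \in b /\ y \in b).

Definition nontrivial_PBD (T : finType) (B : {set {set T}}) : Prop :=
  is_PBD B /\ [set: T] \notin B.

Definition near_pencil (T : finType) (B : {set {set T}}) : Prop :=
  exists2 b0, b0 \in B & #|b0| = #|T| - 1 /\
    (forall b, b \in B -> b != b0 -> #|b| = 2).

From mathcomp Require Import all_boot.
From mathcomp Require Import zify.
Set Implicit Arguments. Unset Strict Implicit. Unset Printing Implicit Defensive.

(* Count incidences: the sum of the block sizes is the sum of the replication
   numbers r_x.  If all blocks are pairs, every r_x is n - 1, so the sum is
   n(n - 1) >= 3(n - 1), with equality only for n = 3.  Otherwise take a block
   b0 of size k >= 3 and let m = n - k >= 1.  A point outside b0 lies on the k
   distinct lines joining it to the points of b0, and a point of b0 lies on b0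
   and on a line to an outside point, so the sum is at least
   2k + mk = 3(n - 1) + (m - 1)(k - 3).  If m >= 2, some point of b0 lies on
   three blocks and the inequality is strict; if m = 1, every other block meets
   b0 and its one-point complement in at most one point each, giving a
   near-pencil. *)

Lemma cards3 (T : finType) (a b c : T) :
  a != b -> a != c -> b != c -> #|[set a; b; c]| = 3.
Proof. by move=> ab ac bc; rewrite -setUA cardsU1 cards2 bc !inE negb_or ab ac. Qed.

Section PairwiseBalancedDesign.

Variables (T : finType) (B : {set {set T}}).

Definition replication (x : T) := #|[set b in B | x \in b]|.

Lemma sum_card_blocks : \sum_(b in B) #|b| = \sum_x replication x.
Proof.
under eq_bigr do rewrite -sum1_card.
rewrite (exchange_big_dep xpredT) //=; apply: eq_bigr => x _.
by rewrite sum1dep_card.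
Qed.

Lemma card_block_lt b : [set: T] \notin B -> b \in B -> #|b| < #|T|.
Proof.
move=> notT bB; rewrite -cardsT proper_card // properT.
by apply: contraNneq notT => <-.
Qed.

Hypothesis pbdB : is_PBD B.

(* The block through two distinct points (junk value [set0] when x = y). *)
Definition line (x y : T) : {set T} :=
  odflt set0 [pick b in B | (x \in b) && (y \in b)].

Lemma lineP x y : x != y -> [/\ line x y \in B, x \in line x y & y \in line x y].
Proof.
move=> xy; have [b [[bB [xb yb]] _]] := pbdB.2 x y xy.
rewrite /line; case: pickP => [b' /andP[] -> /andP[] -> -> //|/(_ b)].
by rewrite bB xb yb.
Qed.

Lemma block_uniq x y b1 b2 : x != y -> b1 \in B -> b2 \in B ->
  x \in b1 -> y \in b1 -> x \in b2 -> y \in b2 -> b1 = b2.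
Proof.
move=> xy b1B b2B x1 y1 x2 y2; have [b [_ uniq_b]] := pbdB.2 x y xy.
by rewrite -(uniq_b b1) // -(uniq_b b2).
Qed.

Lemma card_blockI_le1 b1 b2 : b1 \in B -> b2 \in B -> b1 != b2 -> #|b1 :&: b2| <= 1.
Proof.
move=> b1B b2B; apply: contraNT; rewrite -ltnNge => /card_gt1P[x [y []]].
rewrite !inE => /andP[x1 x2] /andP[y1 y2] xy.
by rewrite (block_uniq xy b1B b2B x1 y1 x2 y2).
Qed.

Lemma replication_ge_card x (S : {set T}) : x \notin S ->
  (forall b y z, b \in B -> x \in b -> y \in S -> z \in S -> y \in b -> z \in b ->
     y = z) ->
  #|S| <= replication x.
Proof.
move=> xS sepS; have xy y : y \in S -> x != y by move=> yS; apply: contraNneq xS => ->.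
rewrite -(card_in_imset (f := line x)); last first.
  move=> y z yS zS eq_yz; have [bB xb yb] := lineP (xy y yS).
  have [_ _ zb] := lineP (xy z zS); rewrite -eq_yz in zb.
  exact: sepS bB xb yS zS yb zb.
apply: subset_leq_card; apply/subsetP => _ /imsetP[y yS ->].
by have [? ? ?] := lineP (xy y yS); rewrite inE; apply/andP.
Qed.

Lemma card_block_le_replication b0 x : b0 \in B -> x \notin b0 ->
  #|b0| <= replication x.
Proof.
move=> b0B xb0; apply: replication_ge_card => // b y z bB xb yb0 zb0 yb zb.
apply/eqP; apply: contraNT xb0 => yz.
by rewrite (block_uniq yz b0B bB yb0 zb0 yb zb).
Qed.

Lemma replication_pairs x : (forall b, b \in B -> #|b| <= 2) ->
  #|T|.-1 <= replication x.
Proof.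
move=> pairs; rewrite -(cardsC1 x); apply: replication_ge_card; first by rewrite !inE eqxx.
move=> b y z bB xb; rewrite !inE => yx zx yb zb; apply/eqP; apply: contraT => yz.
have : #|[set x; y; z]| <= #|b|.
  by apply: subset_leq_card; apply/subsetP => w; rewrite !inE => /orP[/orP[]|] /eqP ->.
by rewrite cards3 1?(eq_sym x) // => /leq_trans/(_ (pairs b bB)).
Qed.

Lemma replication_ge2 b0 x y : b0 \in B -> x \notin b0 -> y \in b0 ->
  2 <= replication y.
Proof.
move=> b0B xb0 yb0; have xy : x != y by apply: contraNneq xb0 => ->.
have [lB xl yl] := lineP xy.
have b0l : b0 != line x y by apply: contraNneq xb0 => ->.
have <- : #|[set b0; line x y]| = 2 by rewrite cards2 b0l.
apply: subset_leq_card; apply/subsetP => b.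
by rewrite !inE => /orP[] /eqP ->; rewrite ?b0B ?lB.
Qed.

Lemma exists_replication_ge3 b0 x1 x2 : b0 \in B ->
  x1 \notin b0 -> x2 \notin b0 -> x1 != x2 ->
  exists2 y, y \in b0 & 3 <= replication y.
Proof.
move=> b0B x1b0 x2b0 x12; have [lB x1l x2l] := lineP x12.
set l := line x1 x2 in lB x1l x2l.
have [y] : exists y, y \in b0 :\: l.
  apply/card_gt0P; rewrite cardsD.
  have b0l : b0 != l by apply: contraNneq x1b0 => ->.
  have := card_blockI_le1 b0B lB b0l; have := pbdB.1 b0 b0B; lia.
rewrite !inE => /andP[yl yb0]; exists y => //.
have x1y : x1 != y by apply: contraNneq x1b0 => ->.
have x2y : x2 != y by apply: contraNneq x2b0 => ->.
have [l1B x1l1 yl1] := lineP x1y; have [l2B x2l2 yl2] := lineP x2y.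
have b0l1 : b0 != line x1 y by apply: contraNneq x1b0 => ->.
have b0l2 : b0 != line x2 y by apply: contraNneq x2b0 => ->.
have l12 : line x1 y != line x2 y.
  apply: contraNneq yl => eq_l; rewrite -eq_l in x2l2.
  by rewrite -(block_uniq x12 l1B lB x1l1 x2l2 x1l x2l).
rewrite -(cards3 b0l1 b0l2 l12); apply: subset_leq_card.
by apply/subsetP => b; rewrite !inE => /orP[/orP[]|] /eqP ->; apply/andP.
Qed.

Lemma sum_replication_out b0 : b0 \in B ->
  #|~: b0| * #|b0| <= \sum_(z in ~: b0) replication z.
Proof.
move=> b0B; rewrite -sum_nat_const; apply: leq_sum => z.
by rewrite inE => zb0; apply: card_block_le_replication.
Qed.

Lemma sum_replication_in b0 x : b0 \in B -> x \notin b0 ->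
  #|b0| * 2 <= \sum_(y in b0) replication y.
Proof.
move=> b0B xb0; rewrite -sum_nat_const; apply: leq_sum => y.
exact: replication_ge2 b0B xb0.
Qed.

Lemma sum_replication_in_lt b0 : b0 \in B -> 1 < #|~: b0| ->
  #|b0| * 2 < \sum_(y in b0) replication y.
Proof.
move=> b0B /card_gt1P[x1 [x2 []]]; rewrite !inE => x1b0 x2b0 x12.
have [y yb0 ry] := exists_replication_ge3 b0B x1b0 x2b0 x12.
rewrite (big_setD1 _ yb0) (cardsD1 y b0) yb0 /=.
have : #|b0 :\ y| * 2 <= \sum_(z in b0 :\ y) replication z.
  rewrite -sum_nat_const; apply: leq_sum => z; rewrite inE => /andP[_].
  exact: replication_ge2 b0B x1b0.
lia.
Qed.

Lemma sum_card_blocks_pairs : 3 <= #|T| -> (forall b, b \in B -> #|b| <= 2) ->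
  3 * #|T| - 3 <= \sum_(b in B) #|b| /\
  (\sum_(b in B) #|b| = 3 * #|T| - 3 -> #|T| = 3).
Proof.
move=> n3 pairs.
have lb : #|T| * #|T|.-1 <= \sum_(b in B) #|b|.
  rewrite sum_card_blocks -sum_nat_const.
  by apply: leq_sum => x _; apply: replication_pairs.
by split; nia.
Qed.

Lemma sum_card_blocks_large b0 : [set: T] \notin B -> b0 \in B -> 2 < #|b0| ->
  3 * #|T| - 3 <= \sum_(b in B) #|b| /\
  (\sum_(b in B) #|b| = 3 * #|T| - 3 -> #|b0| = #|T| - 1).
Proof.
move=> notT b0B k3; have nk := cardsC b0.
have m1 : 0 < #|~: b0| by have := card_block_lt notT b0B; lia.
have /card_gt0P[x] := m1; rewrite inE => xb0.
have -> : \sum_(b in B) #|b| =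
    \sum_(y in b0) replication y + \sum_(z in ~: b0) replication z.
  rewrite sum_card_blocks (bigID (mem b0)) /=; congr (_ + _).
  by apply: eq_bigl => z; rewrite inE.
have out := sum_replication_out b0B; have inb := sum_replication_in b0B xb0.
split; first by nia.
by move=> eq_sum; case: (ltnP 1 #|~: b0|) => [/(sum_replication_in_lt b0B)|]; nia.
Qed.

Lemma near_pencil_of_block b0 : b0 \in B -> #|b0| = #|T| - 1 -> near_pencil B.
Proof.
move=> b0B k; exists b0 => //; split=> // b bB bb0.
apply/eqP; rewrite eqn_leq pbdB.1 // andbT -(cardsID b0 b).
have := card_blockI_le1 bB b0B bb0.
have : #|b :\: b0| <= #|~: b0| by apply: subset_leq_card; rewrite setDE subsetIr.
have := cardsC b0; have := pbdB.1 b0 b0B; lia.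
Qed.

Lemma near_pencil_sum_le : near_pencil B -> \sum_(b in B) #|b| <= 3 * #|T| - 3.
Proof.
case=> b0 b0B [k pairs].
have [x Cx] : exists x, ~: b0 = [set x].
  by apply/cards1P; have := cardsC b0; have := pbdB.1 b0 b0B; lia.
have sub_lines : B :\ b0 \subset line x @: b0.
  apply/subsetP => b; rewrite !inE => /andP[bb0 bB].
  have := cardsID b0 b; have := card_blockI_le1 bB b0B bb0; rewrite (pairs b) //.
  have : #|b :\: b0| <= 1.
    by rewrite -(cards1 x) -Cx; apply: subset_leq_card; rewrite setDE subsetIr.
  move=> out1 in1 two.
  have /cards1P[y by0] : #|b :&: b0| == 1 by apply/eqP; lia.
  have /card_gt0P[z] : 0 < #|b :\: b0| by lia.
  rewrite setDE Cx !inE => /andP[xb /eqP zx]; subst z.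
  have /setIP[yb yb0] : y \in b :&: b0 by rewrite by0 set11.
  have xy : x != y by apply: contraTneq yb0 => <-; rewrite -in_setC Cx set11.
  have [lB xl yl] := lineP xy.
  by apply/imsetP; exists y => //; apply: block_uniq xy bB lB xb yb xl yl.
rewrite (big_setD1 _ b0B) /= (eq_bigr (fun=> 2)); last first.
  by move=> b; rewrite !inE => /andP[bb0 bB]; apply: pairs.
rewrite sum_nat_const (@leq_trans (#|b0| + #|b0| * 2)) //; last first.
  by rewrite -mulnS k mulnBl mulnC.
have le_m := leq_trans (subset_leq_card sub_lines) (leq_imset_card (line x) b0).
by rewrite leq_add2l leq_mul2r le_m orbT.
Qed.

End PairwiseBalancedDesign.

Theorem mainTheorem1 (T : finType) (B : {set {set T}}) :
  nontrivial_PBD B -> 3 <= #|T| ->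
  3 * #|T| - 3 <= \sum_(b in B) #|b| /\
  (\sum_(b in B) #|b| = 3 * #|T| - 3 <-> near_pencil B).
Proof.
move=> [pbdB notT] n3.
have np_le := near_pencil_sum_le pbdB.
suff [lb eq_np] : 3 * #|T| - 3 <= \sum_(b in B) #|b| /\
    (\sum_(b in B) #|b| = 3 * #|T| - 3 -> near_pencil B).
  by split=> //; split=> // /np_le; lia.
have [/exists_inP[b0 b0B k3] | /exists_inPn pairs] := boolP [exists b in B, 2 < #|b|].
  have [lb eq_k] := sum_card_blocks_large pbdB notT b0B k3.
  by split=> // /eq_k; apply: near_pencil_of_block.
have {}pairs b : b \in B -> #|b| <= 2 by move=> /pairs; rewrite -leqNgt.
have [lb eq_n] := sum_card_blocks_pairs pbdB n3 pairs.
split=> // /eq_n n_eq3.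
have [u [v [_ _ uv]]] : exists u v, [/\ u \in [set: T], v \in [set: T] & u != v].
  by apply/card_gt1P; rewrite cardsT n_eq3.
have [lB _ _] := lineP pbdB uv.
apply: (near_pencil_of_block pbdB lB); rewrite n_eq3.
by apply/eqP; rewrite eqn_leq pairs // pbdB.1.
Qed.
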